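(* Let $X$ be a topological space and let $D\subseteq X$ be such that the subspace $D$ is discrete. Then $D$ admits a Noetherian outer base in $X$.
   Context: A family $\mathcal G$ of open sets is Noetherian if $\langle\mathcal G,\subseteq\rangle$ contains no infinite strictly increasing sequence. For $Y\subseteq X$, a family $\mathcal B$ of open subsets of $X$ is an outer base of $Y$ in $X$ if for every $p\in Y$ the family $\{G\in\mathcal B: p\in G\}$ is a neighbourhood base of $p$ in $X$. *)

From mathcomp Require Import all_boot all_order.
From mathcomp Require Import all_classical topology.
Set Implicit Arguments. Unset Strict Implicit. Unset Printing Implicit Defensive.
Local Open Scope classical_set_scope.

Definition discrete_subspace (X : topologicalType) (D : set X) : Prop :=
  forall p, D p -> exists U : set X, open U /\ U `&` D = [set p].

Definition noetherian_family (X : topologicalType) (G : set (set X)) : Prop :=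
  (forall U, G U -> open U) /\
  ~ (exists f : nat -> set X, (forall n, G (f n)) /\ (forall n, f n `<` f n.+1)).

Definition outer_base (X : topologicalType) (Y : set X) (B : set (set X)) : Prop :=
  (forall U, B U -> open U) /\
  (forall p, Y p ->
     (forall U, B U -> U p -> nbhs p U) /\
     (forall N, nbhs p N -> exists U, [/\ B U, U p & U `<=` N])).

(* Well-order all subsets of X and keep, among the open sets meeting D in
   exactly one point, only those preceding in the well-order every such open
   set they contain.  A strictly increasing chain of kept sets is then strictly
   decreasing in the well-order, which is impossible.  For p in D and a
   neighbourhood N of p, the least open set inside N isolating p is kept: an
   open subset of it meeting D in one point must meet it in p, so it is also a
   candidate and cannot precede it. *)
From mathcomp Require Import all_boot all_order.
From mathcomp Require Import all_classical topology.
From mathcomp Require Import wochoice.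
Set Implicit Arguments.
Unset Strict Implicit.
Unset Printing Implicit Defensive.
Local Open Scope classical_set_scope.

Section WellOrder.
Variables (T : eqType) (R : rel T).
Hypothesis wo_R : well_order R.

Lemma well_order_antisymmetric : antisymmetric R.
Proof.
move=> x y; apply: (@wo_chain_antisymmetric _ R predT) => // A _.
exact: wo_R.
Qed.

Lemma well_order_exists_min (P : T -> Prop) :
  (exists x, P x) -> exists2 z, P z & forall x, P x -> R z x.
Proof.
move=> [x Px]; have [|z [[/asboolP Pz lbz] _]] := @wo_R [pred y | `[< P y >]].
  by exists x; apply/asboolP.
by exists z => // y Py; apply: lbz; apply/asboolP.
Qed.

Lemma well_order_no_strict_descent (f : nat -> T) :
  ~ (forall n, R (f n.+1) (f n) /\ f n.+1 != f n).
Proof.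
move=> desc; have [_ [m _ <-] min_m] := @well_order_exists_min (range f)
  (ex_intro _ (f 0) (ex_intro2 _ _ 0 I erefl)).
have [Rnext /eqP] := desc m; apply; apply: well_order_antisymmetric.
by rewrite Rnext min_m //; exists m.+1.
Qed.

End WellOrder.

Section LeastBelow.
Variables (T : Type) (R : rel (set T)).
Hypothesis wo_R : well_order R.

Definition least_below (F : set (set T)) : set (set T) :=
  [set V | F V /\ forall W, F W -> W `<=` V -> R V W].

Lemma least_below_no_increasing_chain (F : set (set T)) (f : nat -> set T) :
  (forall n, least_below F (f n)) -> ~ (forall n, f n `<` f n.+1).
Proof.
move=> fF incr; apply: (well_order_no_strict_descent wo_R (f := f)) => n.
have [sub_f not_sup_f] := incr n; split.
  by apply: (fF n.+1).2; [exact: (fF n).1 | exact: sub_f].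
by apply/eqP => eq_f; apply: not_sup_f; rewrite eq_f.
Qed.

End LeastBelow.

Section IsolatingOpens.
Variables (X : topologicalType) (D : set X).

Definition isolating : set (set X) :=
  [set V | open V /\ exists p, V `&` D = [set p]].

Lemma isolating_sub_point (V W : set X) (p : X) :
  isolating W -> W `<=` V -> V `&` D = [set p] -> W p.
Proof.
move=> [_ [q WD]] WV VD; have [Wq Dq] : (W `&` D) q by rewrite WD.
have : (V `&` D) q by split=> //; apply: WV.
by rewrite VD => <-.
Qed.

Lemma isolating_nbhs_sub (p : X) (N : set X) :
  discrete_subspace D -> D p -> nbhs p N ->
  exists V, [/\ isolating V, V `&` D = [set p] & V `<=` N].
Proof.
move=> discD Dp; rewrite nbhsE => -[O [oO Op] ON].
have [U [oU UD]] := discD p Dp.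
have OUD : O `&` U `&` D = [set p].
  rewrite -setIA UD; apply/seteqP; split=> x; first by case.
  by move=> ->.
exists (O `&` U); split=> //; last by move=> x [/ON].
by split; [exact: openI | exists p].
Qed.

Lemma least_isolating_outer_base (R : rel (set X)) :
  well_order R -> discrete_subspace D -> outer_base D (least_below R isolating).
Proof.
move=> wo_R discD; split=> [U [[]] //|p Dp]; split.
  by move=> U [[oU _] _] Up; apply: open_nbhs_nbhs.
move=> N Np.
have [|W [isoW WD WN] minW] := @well_order_exists_min _ _ wo_R
    [set V | [/\ isolating V, V `&` D = [set p] & V `<=` N]].
  exact: isolating_nbhs_sub.
have Wp : W p by have [] : (W `&` D) p by rewrite WD.
exists W; split=> //; split=> // W' isoW' W'W; apply: minW; split=> //.
- apply/seteqP; split=> x; first by move=> [/W'W Wx Dx]; rewrite -WD.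
  by move=> ->; split=> //; exact: isolating_sub_point isoW' W'W WD.
- by move=> x /W'W /WN.
Qed.

End IsolatingOpens.

Theorem corollary1 (X : topologicalType) (D : set X) :
  discrete_subspace D ->
  exists B : set (set X), outer_base D B /\ noetherian_family B.
Proof.
move=> discD; have [R wo_R] := well_ordering_principle (set X).
exists (least_below R (isolating D)); split.
  exact: least_isolating_outer_base.
split=> [U [[]] // | [f [fB incr]]].
exact: (least_below_no_increasing_chain wo_R fB incr).
Qed.
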